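(* Let $n\ge1$ and $w=\sqrt{(1-x)/(1+x)}$. Then \[R_n^{B,>}(x)=\frac{x}{2}\Big(\frac{1+x}{2}\Big)^{n-1}(1+w)^n\,B_n\!\Big(\frac{1-w}{1+w}\Big).\]
   Context: $\mathfrak B_n$ is the set of signed permutations $\pi=\pi_1\cdots\pi_n$ (words over $\{\pm1,\dots,\pm n\}$ with $|\pi_1|,\dots,|\pi_n|$ a permutation of $[n]$), compared as integers; set $\pi_0=0$. $\mathrm{run}_B(\pi)$ is $1$ plus the number of $i\in\{1,\dots,n-1\}$ with $\pi_{i-1}<\pi_i>\pi_{i+1}$ or $\pi_{i-1}>\pi_i<\pi_{i+1}$, and $R_n^{B,>}(x)=\sum_{\pi\in\mathfrak B_n,\ \pi_1>0}x^{\mathrm{run}_B(\pi)}$. $\mathrm{des}_B(\pi)=\#\{i\in\{0,\dots,n-1\}:\pi_i>\pi_{i+1}\}$ and $B_n(t)=\sum_{\pi\in\mathfrak B_n}t^{\mathrm{des}_B(\pi)}$ is the type B Eulerian polynomial. (The right-hand side, expanded, is a polynomial in $x$; the identity is one of rational functions in $x$ and $w$ with $w^2=(1-x)/(1+x)$.) *)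

From mathcomp Require Import all_boot all_order.
From mathcomp Require Import fingroup perm.
From mathcomp Require Import all_algebra.
Set Implicit Arguments. Unset Strict Implicit. Unset Printing Implicit Defensive.
Import Order.TTheory GRing.Theory Num.Theory.
Local Open Scope ring_scope.

(* A signed permutation of [n] is a pair (s, e) with s : 'S_n and sign bits
   e : 'I_n -> bool; its letter at position i+1 (i : 'I_n) is
   pi_{i+1} = (-1)^(e i) * (s i + 1) : int.  This is a bijective encoding of
   the words over {+-1,...,+-n} whose absolute values form a permutation. *)
Definition sperm (n : nat) : finType := ('S_n * {ffun 'I_n -> bool})%type.

Definition spval n (p : sperm n) (i : 'I_n) : int :=
  (-1) ^+ (p.2 i) * ((p.1 i).+1)%:Z.

Definition sword n (p : sperm n) : seq int :=
  0 :: [seq spval p i | i <- enum 'I_n].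

Definition piB n (p : sperm n) (k : nat) : int := nth 0 (sword p) k.

Definition runB n (p : sperm n) : nat :=
  1 + count (fun i =>
     ((piB p i.-1 < piB p i) && (piB p i > piB p i.+1)) ||
     ((piB p i.-1 > piB p i) && (piB p i < piB p i.+1)))
     (iota 1 n.-1).

Definition desB n (p : sperm n) : nat :=
  count (fun i => piB p i > piB p i.+1) (iota 0 n).

Definition RBpos (R : ringType) (n : nat) (x : R) : R :=
  \sum_(p : sperm n | 0 < piB p 1) x ^+ runB p.

Definition eulerianB (R : ringType) (n : nat) : {poly R} :=
  \sum_(p : sperm n) 'X ^+ desB p.

From mathcomp Require Import all_boot all_order fingroup perm all_algebra.
From mathcomp Require Import ring zify.
Set Implicit Arguments. Unset Strict Implicit. Unset Printing Implicit Defensive.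
Import Order.TTheory GRing.Theory Num.Theory.
Local Open Scope ring_scope.

(* Encode a signed permutation by its descent word u_i = [pi_{i+1} < pi_i],
   i = 0..n-1 (with pi_0 = 0).  Inserting n+1 or -(n+1) at each of the n+1
   positions of a signed permutation of [n] with descent word u yields exactly
   the words [children u], so the descent words of B_n form the multiset
   [desc_words n].  On descent words run_B is one plus the number of changes,
   des_B is the number of descents, and pi_1 > 0 says that the word starts with
   an ascent; complementing a word preserves its changes, so
   2 R_n^{B,>}(x) = x * sum x^changes.
   The weights (1-t^2)^changes (1+t^2)^repeats and (1-t)^des (1+t)^asc are both
   propagated from a word to its children by the same linear operator, so their
   sums over [desc_words n] agree.  At t = w we have 1 - w^2 = 2x/(1+x) and
   1 + w^2 = 2/(1+x), so the first sum is (2/(1+x))^(n-1) sum x^changes, while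
   the second is (1+w)^n B_n((1-w)/(1+w)). *)

Fixpoint descents (s : seq int) : seq bool :=
  match s with
  | a :: ((b :: _) as s') => (b < a) :: descents s'
  | _ => [::]
  end.

Lemma size_descents s : size (descents s) = (size s).-1.
Proof. by elim: s => [|a [|b s] IH] //=; rewrite IH. Qed.

Lemma nth_descents s i :
  (i.+1 < size s)%N -> nth false (descents s) i = (nth 0 s i.+1 < nth 0 s i).
Proof. by elim: s i => [|a [|b s] IH] // [|i] Hi //=; rewrite IH. Qed.

Definition insert_at (t : seq int) (j : nat) (m : int) := take j t ++ m :: drop j t.

Lemma size_insert_at t j m : (j <= size t)%N -> size (insert_at t j m) = (size t).+1.
Proof. by move=> le_j; rewrite size_cat /= size_take size_drop; case: ltnP; lia. Qed.

Lemma nth_insert_at t j m : (j <= size t)%N -> nth 0 (insert_at t j m) j = m.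
Proof. by move=> le_j; rewrite nth_cat size_takel // ltnn subnn. Qed.

Lemma nth_insert_at_bump t j m k :
  (k < size t)%N -> nth 0 (insert_at t j m) (bump j k) = nth 0 t k.
Proof.
elim: t j k => [//|x t IH] [|j] [|k] lt_k //.
by rewrite bumpS /= -(IH j k).
Qed.

Fixpoint children (u : seq bool) : seq (seq bool) :=
  match u with
  | [::] => [:: [:: true]; [:: false]]
  | x :: u' => [:: true :: false :: u', false :: true :: u'
                 & map (cons x) (children u')]
  end.

Lemma children_cons x u : children (x :: u) =
  [:: true :: false :: u, false :: true :: u & map (cons x) (children u)].
Proof. by []. Qed.

Fixpoint desc_words n : seq (seq bool) :=
  if n is n'.+1 then flatten (map children (desc_words n')) else [:: [::]].

Lemma sum_desc_words_succ (R : nmodType) n (f : seq bool -> R) :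
  \sum_(u <- desc_words n.+1) f u = \sum_(u <- desc_words n) \sum_(v <- children u) f v.
Proof. by rewrite /= big_flatten big_map. Qed.

Lemma size_children u v : v \in children u -> size v = (size u).+1.
Proof.
elim: u v => [|x u IH] v /=; first by rewrite !inE => /orP[] /eqP ->.
rewrite !inE => /orP[/eqP -> //|/orP[/eqP -> //|/mapP[v' Hv' ->]]] /=.
by rewrite (IH _ Hv').
Qed.

Lemma size_desc_words n u : u \in desc_words n -> size u = n.
Proof.
elim: n u => [|n IH] u /=; first by rewrite inE => /eqP ->.
by move=> /flatten_mapP[u' Hu' Hu]; rewrite (size_children Hu) (IH _ Hu').
Qed.

Lemma sum_descents_insert_at (R : nmodType) (N : int) (t : seq int) (a : int)
    (g : seq bool -> R) :
  (forall z, z \in a :: t -> - N < z < N) ->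
  \sum_(j < (size t).+1)
     (g (descents (a :: insert_at t j N)) + g (descents (a :: insert_at t j (- N))))
  = \sum_(v <- children (descents (a :: t))) g v.
Proof.
elim: t a g => [|b t IH] a g bounded.
  have Ha := bounded a (mem_head _ _).
  rewrite big_ord1 /insert_at /= !big_cons big_nil addr0 addrC.
  have -> : (N < a) = false by lia.
  by have -> : (- N < a) = true by lia.
have Ha := bounded a (mem_head _ _).
have Hb : - N < b < N by apply: bounded; rewrite !inE eqxx orbT.
rewrite big_ord_recl /= big_cons big_cons big_map.
rewrite -(IH b (fun v => g ((b < a) :: v))); last first.
  by move=> z Hz; apply: bounded; rewrite inE Hz orbT.
have -> : (N < a) = false by lia.
have -> : (- N < a) = true by lia.
have -> : (b < N) = true by lia.
have -> : (b < - N) = false by lia.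
by rewrite [g _ + g _]addrC -addrA; congr (_ + (_ + _)); apply: eq_bigr => j _; rewrite add0n.
Qed.

Lemma spvalE n (p : sperm n) i :
  spval p i = if p.2 i then - ((p.1 i).+1)%:Z else ((p.1 i).+1)%:Z.
Proof. by rewrite /spval; case: (p.2 i); rewrite ?expr0 ?expr1 ?mul1r ?mulN1r. Qed.

Definition letters n (p : sperm n) : seq int := [seq spval p i | i <- enum 'I_n].

Lemma size_letters n (p : sperm n) : size (letters p) = n.
Proof. by rewrite size_map size_enum_ord. Qed.

Lemma nth_letters n (p : sperm n) k (lt_k : (k < n)%N) :
  nth 0 (letters p) k = spval p (Ordinal lt_k).
Proof.
rewrite (nth_map (Ordinal lt_k)) ?size_enum_ord //; congr spval.
by apply: val_inj; rewrite /= nth_enum_ord.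
Qed.

Lemma letters_bound n (p : sperm n) z :
  z \in letters p -> (- (n%:Z) <= z <= n%:Z) && (z != 0).
Proof. by move=> /mapP[i _ ->]; rewrite spvalE; have := ltn_ord (p.1 i); case: (p.2 i); lia. Qed.

Lemma piB_neq n (p : sperm n) i : (i < n)%N -> piB p i != piB p i.+1.
Proof.
case: i => [|k] lt_k.
  have /letters_bound : nth 0 (letters p) 0 \in letters p by rewrite mem_nth ?size_letters.
  by case/andP=> _; rewrite eq_sym.
have lt_k' : (k < n)%N by lia.
rewrite /piB /= -/(letters p) (nth_letters _ lt_k) (nth_letters _ lt_k') !spvalE.
have neq_abs : (p.1 (Ordinal lt_k') : nat) <> p.1 (Ordinal lt_k).
  by move=> /val_inj /perm_inj /(congr1 val) /=; lia.
by case: (p.2 _); case: (p.2 _); apply/eqP => E; apply: neq_abs; lia.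
Qed.

Definition sperm_insert n (q : sperm n * 'I_n.+1 * bool) : sperm n.+1 :=
  let: (p, j, b) := q in
  (lift_perm j ord_max p.1, [ffun i => if unlift j i is Some k then p.2 k else b]).

Lemma sperm_insert_inj n : injective (@sperm_insert n).
Proof.
move=> [[[s1 e1] j1] b1] [[[s2 e2] j2] b2] /= [E1 E2].
have ej : j1 = j2.
  by apply: (@perm_inj _ (lift_perm j1 ord_max s1)); rewrite lift_perm_id E1 lift_perm_id.
subst j2; have <- : b1 = b2 by move/ffunP: E2 => /(_ j1); rewrite !ffunE unlift_none.
congr (_, _, _, _).
  apply/permP => k; apply: (@lift_inj _ ord_max).
  by move/permP: E1 => /(_ (lift j1 k)); rewrite !lift_perm_lift.
by apply/ffunP => k; move/ffunP: E2 => /(_ (lift j1 k)); rewrite !ffunE liftK.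
Qed.

Lemma card_sperm n : #|sperm n| = (n`! * 2 ^ n)%N.
Proof. by rewrite card_prod card_Sn card_ffun card_bool card_ord. Qed.

Lemma sperm_insert_bij n : bijective (@sperm_insert n).
Proof.
apply: inj_card_bij; first exact: sperm_insert_inj.
by rewrite card_sperm !card_prod card_Sn card_ffun !card_bool !card_ord factS expnS; lia.
Qed.

Lemma letters_sperm_insert n (p : sperm n) j b :
  letters (sperm_insert (p, j, b)) =
    insert_at (letters p) j (if b then - (n.+1)%:Z else (n.+1)%:Z).
Proof.
have le_j : (j <= size (letters p))%N by rewrite size_letters -ltnS.
apply: (@eq_from_nth _ 0); first by rewrite size_insert_at // !size_letters.
rewrite size_letters => i lt_i; rewrite (nth_letters _ lt_i).
case: (unliftP j (Ordinal lt_i)) => [k|] Ei; rewrite Ei.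
  have -> : i = bump j k by move: (congr1 val Ei).
  rewrite nth_insert_at_bump ?size_letters // (nth_letters _ (ltn_ord k)).
  rewrite /spval /= ffunE liftK lift_perm_lift lift_max.
  by have -> : Ordinal (ltn_ord k) = k by apply: val_inj.
have -> : i = j by move: (congr1 val Ei).
rewrite nth_insert_at // /spval /= ffunE unlift_none lift_perm_id /=.
by case: b; rewrite ?expr0 ?expr1 ?mul1r ?mulN1r.
Qed.

Definition sdes n (p : sperm n) : seq bool := descents (sword p).

Lemma size_sdes n (p : sperm n) : size (sdes p) = n.
Proof. by rewrite size_descents /= size_letters. Qed.

Lemma nth_sdes n (p : sperm n) i :
  (i < n)%N -> nth false (sdes p) i = (piB p i.+1 < piB p i).
Proof. by move=> lt_i; rewrite nth_descents //= size_letters. Qed.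

Lemma sum_sdes_succ (R : nmodType) n (g : seq bool -> R) :
  \sum_(p : sperm n.+1) g (sdes p) = \sum_(p : sperm n) \sum_(v <- children (sdes p)) g v.
Proof.
transitivity (\sum_(p : sperm n) \sum_(j : 'I_n.+1) \sum_(b : bool)
                g (sdes (sperm_insert (p, j, b)))).
  rewrite (reindex _ (onW_bij _ (@sperm_insert_bij n))) !pair_bigA.
  by apply: eq_bigr => -[[p j] b].
apply: eq_bigr => p _; rewrite /sdes /= -/(letters p).
rewrite -(@sum_descents_insert_at _ (n.+1)%:Z); last first.
  by move=> z; rewrite inE => /orP[/eqP ->|/letters_bound]; lia.
rewrite size_letters; apply: eq_bigr => j _.
by rewrite big_bool /= -!/(letters _) !letters_sperm_insert addrC.
Qed.

Lemma sum_sdes (R : nmodType) n (g : seq bool -> R) :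
  \sum_(p : sperm n) g (sdes p) = \sum_(u <- desc_words n) g u.
Proof.
elim: n g => [|n IH] g.
  rewrite big_seq1 (eq_bigr (fun _ => g [::])); last first.
    by move=> p _; rewrite (size0nil (size_sdes p)).
  by rewrite sumr_const card_sperm.
by rewrite sum_sdes_succ (IH (fun u => \sum_(v <- children u) g v)) sum_desc_words_succ.
Qed.

Fixpoint changes_from (x : bool) (u : seq bool) : nat :=
  if u is y :: u' then ((x != y) + changes_from y u')%N else 0%N.
Definition changes (u : seq bool) : nat := if u is x :: u' then changes_from x u' else 0%N.

Fixpoint repeats_from (x : bool) (u : seq bool) : nat :=
  if u is y :: u' then ((x == y) + repeats_from y u')%N else 0%N.
Definition repeats (u : seq bool) : nat := if u is x :: u' then repeats_from x u' else 0%N.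

Lemma changes_repeats_from x u : (changes_from x u + repeats_from x u = size u)%N.
Proof. by elim: u x => [|y u IH] x //=; rewrite -(IH y); case: (x == y); lia. Qed.

Lemma changes_repeats u : (changes u + repeats u = (size u).-1)%N.
Proof. by case: u => [|x u] //=; rewrite changes_repeats_from. Qed.

Lemma changes_fromE x u : changes_from x u =
  count (fun i => nth false (x :: u) i != nth false (x :: u) i.+1) (iota 0 (size u)).
Proof.
elim: u x => [|y u IH] x //=; rewrite IH; congr (_ + _)%N.
by rewrite (iotaDl 1 0) count_map; apply: eq_count => i /=; rewrite add0n.
Qed.

Lemma changes_map_negb u : changes (map negb u) = changes u.
Proof.
case: u => [|x u] //=.
by elim: u x => [|y u IH] x //=; rewrite IH; case: x; case: y.
Qed.

Lemma peak_or_valleyE (a b c : int) : a != b -> b != c ->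
  ((a < b) && (b > c)) || ((a > b) && (b < c)) = ((b < a) != (c < b)).
Proof. by case: (ltgtP a b) => // ? _; case: (ltgtP b c) => // ? _ /=; lia. Qed.

Lemma runB_sdes n (p : sperm n) : runB p = (1 + changes (sdes p))%N.
Proof.
rewrite /runB; congr (_ + _)%N.
case E : (sdes p) => [|x u].
  by have -> : n.-1 = 0%N by rewrite -(size_sdes p) E.
have size_u : size u = n.-1 by move: (size_sdes p); rewrite E => <-.
rewrite /= changes_fromE size_u -E (iotaDl 1 0) count_map.
apply: eq_in_count => i; rewrite mem_iota add0n => /andP[_ lt_i] /=.
have lt_i1 : (i < n)%N by lia.
have lt_i2 : (i.+1 < n)%N by lia.
by rewrite add1n (nth_sdes _ lt_i1) (nth_sdes _ lt_i2) peak_or_valleyE ?piB_neq.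
Qed.

Lemma desB_sdes n (p : sperm n) : desB p = count id (sdes p).
Proof.
have -> : sdes p = [seq piB p i.+1 < piB p i | i <- iota 0 n].
  apply: (@eq_from_nth _ false); first by rewrite size_sdes size_map size_iota.
  move=> i; rewrite size_sdes => lt_i.
  by rewrite nth_sdes // (nth_map 0%N) ?size_iota // nth_iota.
by rewrite count_map.
Qed.

Lemma piB1_gt0E n (p : sperm n) : (0 < n)%N -> (0 < piB p 1) = ~~ nth false (sdes p) 0.
Proof. by move=> n_gt0; rewrite nth_sdes // -leNgt le_eqVlt (negbTE (piB_neq p n_gt0)). Qed.

Lemma sum_children_changes_from (R : comNzRingType) (f : nat -> R) (x y : bool) u :
  \sum_(v <- children (y :: u)) f (changes_from x v) =
    f (changes_from y u + (x != y))%N *+ (2 * changes_from y u + 1)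
  + f (changes_from y u + 1 + (x != y))%N *+ 2
  + f (changes_from y u + 2 + (x != y))%N *+ (2 * repeats_from y u)
  + f (changes_from y u + 1 + (x == y))%N.
Proof.
elim: u x y f => [|z u IH] x y f.
  by rewrite /= !big_cons big_nil; case: x; case: y => /=; rewrite ?addn0 ?add0n; ring.
rewrite children_cons 2!big_cons big_map.
have := IH y z (fun m => f ((x != y) + m)%N); cbv beta => ->.
by case: x; case: y; case: z => /=; rewrite ?(addn0, add0n, add1n, addn1, addnS, addSn); ring.
Qed.

Lemma sum_children_changes (R : comNzRingType) (f : nat -> R) (x : bool) u :
  \sum_(v <- children (x :: u)) f (changes v) =
    f (changes_from x u) *+ (2 * changes_from x u + 1)
  + f (changes_from x u).+1 *+ 3
  + f (changes_from x u).+2 *+ (2 * repeats_from x u).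
Proof.
case: u => [|y u]; first by rewrite /= !big_cons big_nil /=; case: x => /=; ring.
rewrite children_cons 2!big_cons big_map /= sum_children_changes_from.
by case: x; case: y => /=; rewrite ?(addn0, add0n, add1n, addn1, addnS, addSn); ring.
Qed.

Lemma sum_children_count (R : comNzRingType) (f : nat -> R) u :
  \sum_(v <- children u) f (count id v) =
    f (count id u) *+ (2 * count id u + 1)
  + f (count id u).+1 *+ (2 * count negb u + 1).
Proof.
elim: u f => [|x u IH] f; first by rewrite /= !big_cons big_nil /=; ring.
rewrite children_cons 2!big_cons big_map /=.
have := IH (fun m => f (x + m)%N); cbv beta => ->.
by case: x => /=; rewrite ?(addn0, add0n, add1n, addn1, addnS, addSn); ring.
Qed.

Section Weights.

Variable R : comNzRingType.

Definition child_op (n : nat) (p : {poly R}) : {poly R} :=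
  ((1 + n%:R * (1 - 'X^2)) * p - 'X * (1 - 'X^2) * p^`()) *+ 2.

Lemma child_op_sum n (I : Type) (s : seq I) (f : I -> {poly R}) :
  child_op n (\sum_(i <- s) f i) = \sum_(i <- s) child_op n (f i).
Proof.
apply: (big_morph _ _ (_ : child_op n 0 = 0)) => [p q|]; rewrite /child_op ?derivD ?deriv0.
  by rewrite -mulrnDl; congr (_ *+ 2); ring.
by rewrite !mulr0 subr0 mul0rn.
Qed.

Definition run_weight (u : seq bool) : {poly R} :=
  (1 - 'X^2) ^+ changes u * (1 + 'X^2) ^+ repeats u.

Definition des_weight (u : seq bool) : {poly R} :=
  (1 - 'X) ^+ count id u * (1 + 'X) ^+ count negb u.

Lemma child_op_run_monomial (c k : nat) :
  (1 - 'X^2) ^+ c * (1 + 'X^2) ^+ k.+1 *+ (2 * c + 1)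
  + (1 - 'X^2) ^+ c.+1 * (1 + 'X^2) ^+ k *+ 3
  + (1 - 'X^2) ^+ c.+2 * (1 + 'X^2) ^+ k.-1 *+ (2 * k)
  = child_op (c + k).+1 ((1 - 'X^2) ^+ c * (1 + 'X^2) ^+ k).
Proof.
rewrite /child_op derivM !deriv_exp !derivE.
by case: c => [|c]; case: k => [|k] /=; rewrite ?expr0 ?mulr0n ?mul0rn ?exprS; ring.
Qed.

Lemma child_op_des_monomial (d a : nat) :
  (1 - 'X) ^+ d * (1 + 'X) ^+ a.+1 *+ (2 * d + 1)
  + (1 - 'X) ^+ d.+1 * (1 + 'X) ^+ a *+ (2 * a + 1)
  = child_op (d + a) ((1 - 'X) ^+ d * (1 + 'X) ^+ a).
Proof.
rewrite /child_op derivM !deriv_exp !derivE.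
by case: d => [|d]; case: a => [|a] /=; rewrite ?expr0 ?mulr0n ?mul0rn ?exprS; ring.
Qed.

Lemma sum_children_run_weight x u :
  \sum_(v <- children (x :: u)) run_weight v = child_op (size u).+1 (run_weight (x :: u)).
Proof.
pose f j : {poly R} := (1 - 'X^2) ^+ j * (1 + 'X^2) ^+ ((size u).+1 - j).
rewrite big_seq (eq_bigr (fun v => f (changes v))) -?big_seq; last first.
  move=> v /size_children /= size_v; rewrite /run_weight /f; congr (_ * _ ^+ _).
  by have := changes_repeats v; rewrite size_v; lia.
rewrite sum_children_changes /f /run_weight /= -(changes_repeats_from x u) -child_op_run_monomial.
by congr (_ * _ ^+ _ *+ _ + _ * _ ^+ _ *+ _ + _ * _ ^+ _ *+ _); lia.
Qed.

Lemma sum_children_des_weight u :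
  \sum_(v <- children u) des_weight v = child_op (size u) (des_weight u).
Proof.
pose f t : {poly R} := (1 - 'X) ^+ t * (1 + 'X) ^+ ((size u).+1 - t).
rewrite big_seq (eq_bigr (fun v => f (count id v))) -?big_seq; last first.
  move=> v /size_children size_v; rewrite /des_weight /f; congr (_ * _ ^+ _).
  by rewrite -size_v -(count_predC id v) addKn.
rewrite sum_children_count /f /des_weight -(count_predC id u) -child_op_des_monomial.
by congr (_ * _ ^+ _ *+ _ + _ * _ ^+ _ *+ _); lia.
Qed.

Lemma sum_run_weight_des_weight n :
  \sum_(u <- desc_words n) run_weight u = \sum_(u <- desc_words n) des_weight u.
Proof.
elim: n => [|[|n] IH]; first by rewrite !big_seq1.
  by rewrite /= !big_cons !big_nil /run_weight /des_weight /= !expr0 !expr1 !mulr1 !mul1r; ring.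
rewrite !(sum_desc_words_succ n.+1).
transitivity (\sum_(u <- desc_words n.+1) child_op n.+1 (run_weight u)).
  apply: eq_big_seq => -[|x u] /size_desc_words //= [<-].
  exact: sum_children_run_weight.
rewrite -child_op_sum IH child_op_sum; apply: eq_big_seq => u /size_desc_words <-.
by rewrite sum_children_des_weight.
Qed.

End Weights.

Lemma sum_children_map_negb (R : nmodType) (g : seq bool -> R) u :
  \sum_(v <- children u) g (map negb v) = \sum_(v <- children (map negb u)) g v.
Proof.
elim: u g => [|x u IH] g; first by rewrite /= !big_cons !big_nil /= !addr0 addrC.
rewrite map_cons !children_cons !big_cons !big_map /=.
have := IH (fun v => g (~~ x :: v)); cbv beta => ->.
by rewrite addrA [g _ + g _]addrC -addrA.
Qed.

Lemma sum_desc_words_map_negb (R : nmodType) n (g : seq bool -> R) :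
  \sum_(u <- desc_words n) g (map negb u) = \sum_(u <- desc_words n) g u.
Proof.
elim: n g => [|n IH] g; first by rewrite !big_seq1.
rewrite !sum_desc_words_succ.
under eq_bigr do rewrite sum_children_map_negb.
exact: (IH (fun u => \sum_(v <- children u) g v)).
Qed.

Lemma RBpos_sum_changes (R : comNzRingType) n (x : R) : (0 < n)%N ->
  RBpos n x *+ 2 = x * \sum_(u <- desc_words n) x ^+ changes u.
Proof.
move=> n_gt0; pose g u := if nth false u 0 then 0 else x ^+ (1 + changes u).
have -> : RBpos n x = \sum_(u <- desc_words n) g u.
  rewrite /RBpos big_mkcond -(sum_sdes _ g); apply: eq_bigr => p _.
  by rewrite piB1_gt0E // runB_sdes /g; case: (nth _ _ _).
rewrite mulr2n -{2}(sum_desc_words_map_negb _ g) -big_split mulr_sumr /=.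
apply: eq_big_seq => u /size_desc_words; case: u => [n0|b u _]; first by rewrite -n0 in n_gt0.
by rewrite /g (changes_map_negb (b :: u)); case: b; rewrite /= ?add0r ?addr0 exprS.
Qed.

Lemma eulerianB_horner_des_weight (F : fieldType) n (w : F) : 1 + w != 0 ->
  (1 + w) ^+ n * (eulerianB F n).[(1 - w) / (1 + w)]
  = \sum_(u <- desc_words n) (des_weight F u).[w].
Proof.
move=> w1_neq0; rewrite /eulerianB horner_sum mulr_sumr -sum_sdes.
apply: eq_bigr => p _; rewrite hornerXn /des_weight !hornerE desB_sdes.
rewrite -{1}(size_sdes p) -(count_predC id) exprD expr_div_n.
by field; rewrite expf_neq0.
Qed.

Lemma run_weight_horner (F : fieldType) (x w : F) u :
  1 + x != 0 -> w ^+ 2 = (1 - x) / (1 + x) ->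
  (run_weight F u).[w] = (2 / (1 + x)) ^+ (size u).-1 * x ^+ changes u.
Proof.
move=> x1_neq0 w2E; rewrite /run_weight hornerM !horner_exp !hornerE.
have -> : 1 - w ^+ 2 = 2 / (1 + x) * x by rewrite w2E; field.
have -> : 1 + w ^+ 2 = 2 / (1 + x) by rewrite w2E; field.
by rewrite -changes_repeats exprD exprMn; ring.
Qed.

Theorem mainTheorem16 (F : fieldType) (n : nat) (x w : F) :
  (1 <= n)%N -> (2 : F) != 0 -> 1 + x != 0 -> 1 + w != 0 ->
  w ^+ 2 = (1 - x) / (1 + x) ->
  RBpos n x =
    x / 2 * ((1 + x) / 2) ^+ n.-1 * (1 + w) ^+ n
      * (eulerianB F n).[(1 - w) / (1 + w)].
Proof.
move=> n_gt0 two_neq0 x1_neq0 w1_neq0 w2E.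
have eulerianE : (1 + w) ^+ n * (eulerianB F n).[(1 - w) / (1 + w)]
    = (2 / (1 + x)) ^+ n.-1 * \sum_(u <- desc_words n) x ^+ changes u.
  rewrite eulerianB_horner_des_weight // -horner_sum -sum_run_weight_des_weight.
  rewrite horner_sum mulr_sumr; apply: eq_big_seq => u /size_desc_words <-.
  exact: run_weight_horner.
apply: (mulIf two_neq0); rewrite [LHS]mulr_natr RBpos_sum_changes // -mulrA eulerianE.
rewrite mulrA -[_ * _ ^+ n.-1 * _]mulrA -exprMn.
have -> : (1 + x) / 2 * (2 / (1 + x)) = 1 by field; rewrite two_neq0 x1_neq0.
by rewrite expr1n mulr1; field.
Qed.
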